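(* Let $N_f \ge 1$ be an integer, $\beta>0$, $\lambda>0$ and $r_c>0$. Let $p_r(i)=i^{-\beta}/\sum_{k=1}^{N_f}k^{-\beta}$ for $i=1,\dots,N_f$. Consider the optimization problem \[ \max_{p_c(1),\dots,p_c(N_f)} \ \sum_{i=1}^{N_f}p_r(i)\left(1-e^{-\lambda p_c(i)\pi r_c^2}\right)\quad \text{s.t.}\quad \sum_{i=1}^{N_f}p_c(i)=1,\ \ p_c(i)\ge 0,\ i=1,\dots,N_f, \] and denote its optimal solution by $p_c^*(i)$, $i=1,\dots,N_f$. If $\frac{N_f^{N_f}}{N_f!} < e^{\frac{\lambda\pi r_c^2}{\beta}}$, then \[ p_c^*(i)=\frac{\beta}{\lambda\pi r_c^2 N_f}\sum_{j=1}^{N_f}\ln\Big(\frac{j}{i}\Big)+\frac{1}{N_f},\qquad i=1,\dots,N_f. \] Otherwise, \[ p_c^*(i)=\begin{cases}\frac{\beta}{\lambda\pi r_c^2 i^*}\sum_{j=1}^{i^*}\ln\Big(\frac{j}{i}\Big)+\frac{1}{i^*}, & i\le i^*,\\ 0, & i^*<i\le N_f,\end{cases} \] where the integer $i^*$ satisfies $\frac{(i^*+1)^{i^*}}{i^*!}\ge e^{\frac{\lambda\pi r_c^2}{\beta}}$, $\frac{(i^* )^{i^*}}{i^*!}< e^{\frac{\lambda\pi r_c^2}{\beta}}$, and $\frac{\lambda\pi r_c^2}{\beta}-1\le i^*\le \frac{\lambda\pi r_c^2}{\beta}+\ln(\sqrt{2\pi N_f})+1$.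
   Context: Interpretation: users form a Poisson point process of density $\lambda$; $p_r(i)$ (Zipf distribution with parameter $\beta$) is the probability a user requests file $i$ out of $N_f$ files; $p_c(i)$ is the probability a user caches file $i$; $r_c$ is the collaboration distance; the objective is the offloading ratio. *)

From mathcomp Require Import all_boot all_order all_algebra.
From mathcomp Require Import all_classical all_reals all_analysis.
Set Implicit Arguments. Unset Strict Implicit. Unset Printing Implicit Defensive.
Import Order.TTheory GRing.Theory Num.Theory.
Local Open Scope ring_scope.

(* Files are indexed by i = 1, ..., Nf; a caching distribution is a function
   nat -> R of which only the values at 1..Nf matter. *)

Definition pr {R : realType} (Nf : nat) (beta : R) (i : nat) : R :=
  (i%:R `^ (- beta)) / \sum_(1 <= k < Nf.+1) (k%:R `^ (- beta)).

Definition offloading {R : realType} (Nf : nat) (beta lam rc : R)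
    (pc : nat -> R) : R :=
  \sum_(1 <= i < Nf.+1)
     pr Nf beta i * (1 - expR (- (lam * pc i * pi * rc ^+ 2))).

Definition feasible {R : realType} (Nf : nat) (pc : nat -> R) : Prop :=
  \sum_(1 <= i < Nf.+1) pc i = 1 /\ (forall i, (1 <= i <= Nf)%N -> 0 <= pc i).

Definition is_optimal {R : realType} (Nf : nat) (beta lam rc : R)
    (pc : nat -> R) : Prop :=
  feasible Nf pc /\
  (forall q : nat -> R, feasible Nf q ->
     offloading Nf beta lam rc q <= offloading Nf beta lam rc pc).

(* "p_c^* is the optimal solution": it is optimal and every optimal solution
   coincides with it on the indices 1..Nf. *)
Definition is_the_optimal_solution {R : realType} (Nf : nat) (beta lam rc : R)
    (pstar : nat -> R) : Prop :=
  is_optimal Nf beta lam rc pstar /\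
  (forall pc, is_optimal Nf beta lam rc pc ->
     forall i, (1 <= i <= Nf)%N -> pc i = pstar i).

(* With a := lam pi rc^2, the objective sum_i w_i (1 - exp (- a q_i)) is strictly
   concave, so a feasible point satisfying the KKT conditions is its unique
   maximizer: the tilted weights w_i exp (- a p_i) must be constant on the
   support of p and no larger off it.  For Zipf weights w_i ~ i^-beta this
   forces the water-filling profile p_i = c - (beta / a) ln i on a support
   {1..k}; it is nonnegative iff k^k / k! < exp (a / beta), and the
   off-support condition holds iff exp (a / beta) <= (k+1)^k / k!.  Since
   (k+1)^k / k! = (k+1)^(k+1) / (k+1)!, the threshold k exists by a discrete
   intermediate value argument, and the bounds on it follow from
   (k+1)^k <= e^k k! and the Stirling-type estimate e^(k-1) k! <= sqrt k k^k. *)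

From mathcomp Require Import all_boot all_order all_algebra.
From mathcomp Require Import all_classical all_reals all_analysis.
From mathcomp Require Import ring lra zify.
Import Order.TTheory GRing.Theory Num.Theory.
Set Implicit Arguments. Unset Strict Implicit. Unset Printing Implicit Defensive.
Local Open Scope ring_scope.

Section FactorialBounds.
Variable R : realType.
Implicit Types (k : nat) (t : R).

Lemma ln_fact k : ln (k`!%:R : R) = \sum_(1 <= j < k.+1) ln (j%:R : R).
Proof.
elim: k => [|k IH]; first by rewrite big_geq // ln1.
rewrite big_nat_recr //= -IH factS natrM lnM ?posrE ?ltr0n ?fact_gt0 //.
by rewrite addrC.
Qed.

Lemma ln_pow_div_fact k (m : R) : 0 < m ->
  ln (m ^+ k / k`!%:R) = k%:R * ln m - ln (k`!%:R : R).
Proof.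
move=> m0.
by rewrite ln_div ?posrE ?exprn_gt0 ?ltr0n ?fact_gt0 // lnXn // mulr_natl.
Qed.

Lemma pow_div_fact_succ k :
  k.+1%:R ^+ k.+1 / k.+1`!%:R = k.+1%:R ^+ k / k`!%:R :> R.
Proof. by rewrite factS natrM exprS invfM mulrACA mulfV ?mul1r ?pnatr_eq0. Qed.

(* For t < 2 this is the Pade bound expR t <= (2 + t) / (2 - t); with
   t = 2 / (2k + 1) it yields (1 + 1/k)^(2k+1) >= e^2. *)
Lemma expR_pade_ge0 t : 0 <= t -> 0 <= (2 + t) - (2 - t) * expR t.
Proof.
move=> t0.
pose chi := (cst 2 + id) - ((cst 2 - id) * (@expR R)).
have chi_derive x : is_derive x (1:R) chi (1 - ((2 - x) * expR x - expR x)).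
  apply: is_derive_eq; rewrite /= /cst -![_ *: _]/(_ * _).
  by rewrite (_ : ((fun=> (2:R)) - id) x = 2 - x) //; ring.
have chi'_ge0 x : 0 <= x -> 0 <= derive1 chi x.
  move=> x0; rewrite derive1E (@derive_val _ _ _ _ _ _ _ (chi_derive x)).
  have := expR_ge1Dx (- x); rewrite expRN -subr_ge0 => h.
  have ex := expR_gt0 x.
  have : 0 <= ((expR x)^-1 - (1 - x)) * expR x by apply: mulr_ge0; lra.
  by rewrite mulrBl mulVf ?gt_eqF //; lra.
have : chi 0 <= chi t.
  apply: (@ger0_derive1_ndecry R chi 0) => //.
  - by move=> x; rewrite in_itv /= andbT => /ltW; apply: chi'_ge0.
  - by apply: derivable_within_continuous => x _.
have -> : chi 0 = 2 + 0 - (2 - 0) * expR 0 by [].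
by have -> : chi t = 2 + t - (2 - t) * expR t by []; rewrite expR0; lra.
Qed.

Lemma expR2_mul_pow_le k : (0 < k)%N ->
  expR 2 * k%:R ^+ (2 * k).+1 <= k.+1%:R ^+ (2 * k).+1 :> R.
Proof.
move=> k0.
have hn : (2 * k).+1%:R = 2 * k%:R + 1 :> R by rewrite -addn1 natrD natrM.
have kpos : 0 < k%:R :> R by rewrite ltr0n.
pose t : R := 2 / (2 * k).+1%:R.
have ht : t * (2 * k%:R + 1) = 2.
  by rewrite /t hn mulrAC -mulrA mulfV ?mulr1 //; apply/negP => /eqP; lra.
have t0 : 0 <= t by rewrite /t divr_ge0 // ler0n.
have h := mulr_ge0 (_ : 0 <= 2 * k%:R + 1) (expR_pade_ge0 t0).
have key : expR t * k%:R <= k.+1%:R.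
  by rewrite -addn1 natrD; move: h => /(_ ltac:(lra)); nra.
rewrite (_ : expR 2 = expR t ^+ (2 * k).+1); last by rewrite -expRM_natr hn ht.
by rewrite -exprMn; apply: lerXn2r => //; rewrite nnegrE ?ler0n.
Qed.

Lemma expR_mul_fact_sqr_le k : (0 < k)%N ->
  expR (2 * (k%:R - 1)) * k`!%:R ^+ 2 <= k%:R * (k%:R ^+ k) ^+ 2 :> R.
Proof.
elim: k => // -[_ _|k IH _].
  by rewrite /= expr1n !mul1r subrr mulr0 expR0 mulr1.
set K : R := k.+1%:R; set A := expR (2 * (K - 1)); set X : R := k.+1`!%:R.
have hK : k.+2%:R = K + 1 :> R by rewrite /K -addn1 natrD.
rewrite factS natrM -/X hK.
have -> : expR (2 * (K + 1 - 1)) = expR 2 * A by rewrite /A -expRD; congr expR; ring.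
have -> : (K + 1) * ((K + 1) ^+ k.+2) ^+ 2
        = (K + 1) ^+ 2 * (K + 1) ^+ (2 * k.+1).+1.
  by rewrite -exprM -exprS -exprD; congr (_ ^+ _); lia.
have IH2 : A * X ^+ 2 <= K ^+ (2 * k.+1).+1.
  by move: (IH isT); rewrite -/K -/A -/X -exprM mulrC -exprS mulnC.
have E2 := @expR2_mul_pow_le k.+1 isT; rewrite -/K -hK in E2 *.
rewrite (_ : _ * _ * _ = k.+2%:R ^+ 2 * (expR 2 * (A * X ^+ 2))); last first.
  by rewrite exprMn; ring.
apply: ler_wpM2l; first exact: exprn_ge0 (ler0n _ _).
by apply: le_trans E2; apply: ler_wpM2l => //; exact: expR_ge0.
Qed.

Lemma pow_succ_le_expR_mul_fact k : k.+1%:R ^+ k <= expR k%:R * k`!%:R :> R.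
Proof.
elim: k => [|k IH]; first by rewrite expr0 expR0 mul1r.
set K : R := k.+1%:R.
have Kpos : 0 < K by rewrite ltr0n.
have hK : k.+2%:R = K + 1 :> R by rewrite /K -addn1 natrD.
have h1 : K + 1 <= expR K^-1 * K.
  have := ler_wpM2r (ltW Kpos) (expR_ge1Dx K^-1).
  by rewrite mulrDl mul1r mulVf ?gt_eqF // addrC.
have h2 : (K + 1) ^+ k.+1 <= expR 1 * K ^+ k.+1.
  rewrite (_ : expR 1 = expR K^-1 ^+ k.+1); last first.
    by rewrite -expRM_natr -/K mulVf ?gt_eqF.
  rewrite -exprMn; apply: lerXn2r => //; rewrite nnegrE; first lra.
  by apply: mulr_ge0; [exact: expR_ge0 | lra].
rewrite hK factS natrM -/K; apply: (le_trans h2); rewrite exprS.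
rewrite (_ : expR K * _ = expR 1 * (K * (expR k%:R * k`!%:R))); last first.
  by rewrite /K -addn1 natrD expRD; ring.
apply: ler_wpM2l; first exact: expR_ge0.
by apply: ler_wpM2l; [lra | exact: IH].
Qed.

Lemma ln_pow_succ_div_fact_le k : ln (k.+1%:R ^+ k / k`!%:R) <= k%:R :> R.
Proof.
rewrite -[leRHS]expRK ler_ln ?posrE ?expR_gt0 ?divr_gt0 ?exprn_gt0 ?ltr0n ?fact_gt0 //.
by rewrite ler_pdivrMr ?ltr0n ?fact_gt0 // pow_succ_le_expR_mul_fact.
Qed.

Lemma ln_pow_div_fact_ge k : (0 < k)%N ->
  k%:R - 1 <= ln (k%:R ^+ k / k`!%:R) + ln (k%:R : R) / 2 :> R.
Proof.
move=> k0; have kpos : 0 < k%:R :> R by rewrite ltr0n.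
have fpos : 0 < k`!%:R :> R by rewrite ltr0n fact_gt0.
have Fpos : 0 < k%:R ^+ k / k`!%:R :> R by rewrite divr_gt0 ?exprn_gt0.
have : expR (2 * (k%:R - 1)) <= k%:R * (k%:R ^+ k / k`!%:R) ^+ 2 :> R.
  rewrite expr_div_n mulrA ler_pdivlMr ?exprn_gt0 //.
  exact: expR_mul_fact_sqr_le.
rewrite -ler_ln ?posrE ?expR_gt0 ?mulr_gt0 ?exprn_gt0 // expRK.
by rewrite lnM ?posrE ?exprn_gt0 // lnXn //; lra.
Qed.

End FactorialBounds.

Section ExpUtility.
Variables (R : realType) (n : nat) (a : R) (w : nat -> R).
Hypothesis a_gt0 : 0 < a.
Hypothesis w_gt0 : forall i, (1 <= i <= n)%N -> 0 < w i.

Definition exp_utility (q : nat -> R) : R :=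
  \sum_(1 <= i < n.+1) w i * (1 - expR (- (a * q i))).

(* The Bregman divergence of the convex function [y |-> expR (- (a * y))]. *)
Definition exp_divergence (x y : R) : R :=
  expR (- (a * y)) - expR (- (a * x)) + a * expR (- (a * x)) * (y - x).

Lemma exp_divergenceE x y : exp_divergence x y =
  expR (- (a * x)) * (expR (- (a * (y - x))) - (1 + - (a * (y - x)))).
Proof.
rewrite /exp_divergence.
have -> : expR (- (a * y)) = expR (- (a * x)) * expR (- (a * (y - x))).
  by rewrite -expRD; congr expR; ring.
ring.
Qed.

Lemma exp_divergence_ge0 x y : 0 <= exp_divergence x y.
Proof.
by rewrite exp_divergenceE mulr_ge0 ?expR_ge0 // subr_ge0 expR_ge1Dx.
Qed.

Lemma exp_divergence_eq0 x y : exp_divergence x y = 0 -> y = x.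
Proof.
rewrite exp_divergenceE => h0; apply/eqP/negPn/negP => yx.
have u0 : - (a * (y - x)) != 0 by rewrite oppr_eq0 mulf_neq0 ?subr_eq0 // gt_eqF.
have := expR_gt1Dx u0; rewrite -subr_gt0 => /(mulr_gt0 (expR_gt0 (- (a * x)))).
by rewrite h0 ltxx.
Qed.

Let grad (p : nat -> R) i := w i * a * expR (- (a * p i)).

(* Concavity, written as an exact first-order expansion around [p]. *)
Lemma exp_utility_expansion p q : exp_utility q =
  exp_utility p + \sum_(1 <= i < n.+1) grad p i * (q i - p i)
  - \sum_(1 <= i < n.+1) w i * exp_divergence (p i) (q i).
Proof.
rewrite /exp_utility -big_split -sumrB /=; apply: eq_bigr => i _.
by rewrite /grad /exp_divergence; ring.
Qed.

Variables (p : nat -> R) (nu : R).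
Hypothesis p_feasible : feasible n p.
Hypothesis tilted_le : forall i, (1 <= i <= n)%N -> w i * expR (- (a * p i)) <= nu.
Hypothesis tilted_support :
  forall i, (1 <= i <= n)%N -> p i != 0 -> w i * expR (- (a * p i)) = nu.

Lemma exp_utility_divergence_le q : feasible n q ->
  exp_utility q + \sum_(1 <= i < n.+1) w i * exp_divergence (p i) (q i)
  <= exp_utility p.
Proof.
case: p_feasible => Sp _ [Sq q_ge0].
have grad_p : \sum_(1 <= i < n.+1) grad p i * p i = a * nu.
  rewrite -[RHS]mulr1 -Sp mulr_sumr; apply: eq_big_nat => i /andP[i1 iN].
  have [->|p0] := eqVneq (p i) 0; first by rewrite !mulr0.
  have iN' : (1 <= i <= n)%N by rewrite i1 -ltnS.
  by rewrite /grad -(tilted_support iN' p0); ring.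
have grad_q : \sum_(1 <= i < n.+1) grad p i * q i <= a * nu.
  rewrite -[_ * nu]mulr1 -Sq mulr_sumr; apply: ler_sum_nat => i /andP[i1 iN].
  have iN' : (1 <= i <= n)%N by rewrite i1 -ltnS.
  apply: ler_wpM2r; first exact: q_ge0.
  rewrite /grad mulrAC mulrC.
  by apply: ler_wpM2l; [exact: ltW | exact: tilted_le].
have := exp_utility_expansion p q.
rewrite (eq_bigr _ (fun i _ => mulrBr (grad p i) (q i) (p i))) sumrB grad_p.
lra.
Qed.

Lemma weighted_divergence_ge0 q i : (1 <= i < n.+1)%N ->
  0 <= w i * exp_divergence (p i) (q i).
Proof.
case/andP=> i1 iN; rewrite mulr_ge0 ?exp_divergence_ge0 // ltW // w_gt0 //.
by rewrite i1 -ltnS.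
Qed.

Lemma exp_utility_le q : feasible n q -> exp_utility q <= exp_utility p.
Proof.
move=> /exp_utility_divergence_le; apply: le_trans; rewrite lerDl big_nat_cond.
by apply: sumr_ge0 => i /andP[+ _]; exact: weighted_divergence_ge0.
Qed.

Lemma exp_utility_maximizer_unique q : feasible n q ->
  exp_utility p <= exp_utility q -> forall i, (1 <= i <= n)%N -> q i = p i.
Proof.
move=> fq le_pq i /andP[i1 iN].
have : \sum_(1 <= j < n.+1) w j * exp_divergence (p j) (q j) == 0.
  rewrite eq_le big_nat_cond sumr_ge0 ?andbT -?big_nat_cond.
    by have := exp_utility_divergence_le fq; lra.
  by move=> j /andP[+ _]; exact: weighted_divergence_ge0.
rewrite big_nat_cond psumr_eq0; last by move=> j /andP[+ _]; exact: weighted_divergence_ge0.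
move=> /allP /(_ i); rewrite mem_index_iota i1 ltnS iN /= => /(_ isT).
rewrite mulf_eq0 gt_eqF ?w_gt0 ?i1 //= => /eqP; exact: exp_divergence_eq0.
Qed.

End ExpUtility.

Section Offloading.
Variables (R : realType) (Nf : nat) (beta lam rc : R).
Hypotheses (lam_gt0 : 0 < lam) (rc_gt0 : 0 < rc).

Let a := lam * pi * rc ^+ 2.

Lemma coverage_gt0 : 0 < a.
Proof. by rewrite !mulr_gt0 ?exprn_gt0 ?pi_gt0. Qed.

Lemma natr_powRN i : (0 < i)%N -> i%:R `^ (- beta) = expR (- beta * ln i%:R) :> R.
Proof. by move=> i0; rewrite -ln_powR lnK // posrE powR_gt0 // ltr0n. Qed.

Lemma zipf_norm_gt0 : (0 < Nf)%N ->
  0 < \sum_(1 <= j < Nf.+1) (j%:R : R) `^ (- beta).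
Proof.
move=> Nf0; rewrite big_ltn ?ltnS //; apply: ltr_wpDr.
  by apply: sumr_ge0 => j _; exact: powR_ge0.
by rewrite powR_gt0 ?ltr0n.
Qed.

Lemma pr_gt0 i : (1 <= i <= Nf)%N -> 0 < pr Nf beta i.
Proof.
case/andP=> i1 iN; rewrite divr_gt0 ?zipf_norm_gt0 ?powR_gt0 ?ltr0n //.
exact: leq_trans iN.
Qed.

Lemma offloadingE q : offloading Nf beta lam rc q = exp_utility Nf a (pr Nf beta) q.
Proof.
by apply: eq_bigr => i _; rewrite /a; congr (_ * (1 - expR (- _))); ring.
Qed.

Lemma is_the_optimal_solution_KKT p nu : feasible Nf p ->
  (forall i, (1 <= i <= Nf)%N -> pr Nf beta i * expR (- (a * p i)) <= nu) ->
  (forall i, (1 <= i <= Nf)%N -> p i != 0 ->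
     pr Nf beta i * expR (- (a * p i)) = nu) ->
  is_the_optimal_solution Nf beta lam rc p.
Proof.
move=> fp le_nu eq_nu.
have opt q : feasible Nf q -> offloading Nf beta lam rc q <= offloading Nf beta lam rc p.
  by rewrite !offloadingE; exact: (exp_utility_le coverage_gt0 pr_gt0 fp le_nu eq_nu).
split=> [//|q [fq opt_q]].
apply: (exp_utility_maximizer_unique coverage_gt0 pr_gt0 fp le_nu eq_nu fq).
by rewrite -!offloadingE; exact: opt_q.
Qed.

Lemma is_the_optimal_solution_eq_on p p' :
  (forall i, (1 <= i <= Nf)%N -> p i = p' i) ->
  is_the_optimal_solution Nf beta lam rc p ->
  is_the_optimal_solution Nf beta lam rc p'.
Proof.
move=> e [[[Sp p_ge0] opt_p] uniq_p].
have e' i : (1 <= i < Nf.+1)%N -> p i = p' i by rewrite ltnS => /e.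
have off : offloading Nf beta lam rc p = offloading Nf beta lam rc p'.
  by apply: eq_big_nat => i /e' ->.
have fp' : feasible Nf p'.
  split=> [|i iN]; last by rewrite -e ?p_ge0.
  by rewrite -Sp; apply: eq_big_nat => i /e' ->.
split=> [|q opt_q i iN]; first by split=> // q /opt_p; rewrite off.
by rewrite -e // uniq_p.
Qed.

End Offloading.

Definition waterfill {R : realType} (k : nat) (beta a : R) (i : nat) : R :=
  if (i <= k)%N then
    beta / (a * k%:R) * (\sum_(1 <= j < k.+1) ln (j%:R / i%:R)) + k%:R^-1
  else 0.

(* The constant c of the profile p_i = c - (beta / a) ln i, fixed by
   sum_(i <= k) p_i = 1. *)
Definition water_level {R : realType} (k : nat) (beta a : R) : R :=
  (beta * ln k`!%:R + a) / (a * k%:R).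

Section Waterfilling.
Variables (R : realType) (k : nat) (beta a : R).
Hypotheses (k_gt0 : (0 < k)%N) (beta_gt0 : 0 < beta) (a_gt0 : 0 < a).

Let k_gt0R : 0 < k%:R :> R. Proof. by rewrite ltr0n. Qed.

Lemma waterfillE i : (1 <= i <= k)%N ->
  waterfill k beta a i = water_level k beta a - beta / a * ln i%:R.
Proof.
move=> /andP[i1 ik]; rewrite /waterfill ik /water_level ln_fact.
have -> : \sum_(1 <= j < k.+1) ln (j%:R / i%:R) =
          \sum_(1 <= j < k.+1) ln (j%:R : R) - k%:R * ln (i%:R : R).
  rewrite (eq_big_nat _ _ (F2 := fun j => ln (j%:R : R) - ln i%:R)); last first.
    by move=> j /andP[j1 _]; rewrite ln_div // posrE ltr0n.
  by rewrite sumrB sumr_const_nat subn1 /= mulr_natl.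
by field; rewrite !gt_eqF.
Qed.

Lemma waterfill_eq0 i : (k < i)%N -> waterfill k beta a i = 0.
Proof. by rewrite /waterfill ltnNge => /negbTE ->. Qed.

Lemma sum_waterfill n : (k <= n)%N -> \sum_(1 <= i < n.+1) waterfill k beta a i = 1.
Proof.
move=> kn; rewrite (big_cat_nat (n := k.+1)) //= [X in _ + X]big1_seq ?addr0.
  rewrite (eq_big_nat _ _ (F2 := fun i => water_level k beta a - beta / a * ln i%:R));
    last exact: waterfillE.
  rewrite sumrB sumr_const_nat subn1 /= -mulr_natl -mulr_sumr -ln_fact /water_level.
  by field; rewrite !gt_eqF.
by move=> i /andP[_]; rewrite mem_index_iota => /andP[ki _]; exact: waterfill_eq0.
Qed.

Lemma waterfill_gt0 i : k%:R ^+ k / k`!%:R < expR (a / beta) ->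
  (1 <= i <= k)%N -> 0 < waterfill k beta a i.
Proof.
move=> Fk /[dup] ik /andP[i1 ile]; rewrite waterfillE //.
move: Fk; rewrite -ltr_ln ?posrE ?expR_gt0 ?divr_gt0 ?exprn_gt0 ?ltr0n ?fact_gt0 //.
rewrite expRK ln_pow_div_fact // ltr_pdivlMr // => Fk.
have lnik : ln (i%:R : R) <= ln k%:R by rewrite ler_ln ?posrE ?ltr0n ?ler_nat.
rewrite subr_gt0 /water_level ltr_pdivlMr ?mulr_gt0 //.
rewrite (_ : beta / a * _ * _ = beta * (k%:R * ln i%:R)); last by field; rewrite gt_eqF.
have : beta * (k%:R * ln i%:R) <= beta * (k%:R * ln k%:R).
  by rewrite ler_pM2l // ler_pM2l.
nra.
Qed.

Lemma zipf_tilted_eq i : (1 <= i <= k)%N ->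
  i%:R `^ (- beta) * expR (- (a * waterfill k beta a i))
  = expR (- (a * water_level k beta a)).
Proof.
move=> ik; rewrite natr_powRN ?waterfillE //; last by case/andP: ik.
by rewrite -expRD; congr expR; field; rewrite gt_eqF.
Qed.

Lemma zipf_tilted_le i : expR (a / beta) <= k.+1%:R ^+ k / k`!%:R ->
  (k < i)%N ->
  i%:R `^ (- beta) * expR (- (a * waterfill k beta a i))
  <= expR (- (a * water_level k beta a)).
Proof.
move=> Gk ki; rewrite waterfill_eq0 // mulr0 oppr0 expR0 mulr1.
rewrite natr_powRN; last exact: leq_trans k_gt0 (ltnW ki).
rewrite ler_expR mulNr lerN2.
move: Gk; rewrite -ler_ln ?posrE ?expR_gt0 ?divr_gt0 ?exprn_gt0 ?ltr0n ?fact_gt0 //.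
rewrite expRK ln_pow_div_fact ?ltr0n // ler_pdivrMr // => Gk.
have lnki : ln (k.+1%:R : R) <= ln i%:R.
  by rewrite ler_ln ?posrE ?ltr0n ?ler_nat // (leq_trans _ ki).
have -> : a * water_level k beta a = (beta * ln k`!%:R + a) / k%:R.
  by rewrite /water_level; field; rewrite !gt_eqF.
rewrite ler_pdivrMr //.
have : beta * (k%:R * ln k.+1%:R) <= beta * (k%:R * ln i%:R).
  by rewrite ler_pM2l // ler_pM2l.
nra.
Qed.

End Waterfilling.

Lemma waterfill_optimal (R : realType) (Nf k : nat) (beta lam rc : R) :
  0 < beta -> 0 < lam -> 0 < rc -> (1 <= k <= Nf)%N ->
  k%:R ^+ k / k`!%:R < expR (lam * pi * rc ^+ 2 / beta) ->
  ((k < Nf)%N -> expR (lam * pi * rc ^+ 2 / beta) <= k.+1%:R ^+ k / k`!%:R) ->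
  is_the_optimal_solution Nf beta lam rc (waterfill k beta (lam * pi * rc ^+ 2)).
Proof.
move=> beta0 lam0 rc0 /andP[k1 kN] Fk Gk.
have a0 := coverage_gt0 lam0 rc0; set a := lam * pi * rc ^+ 2 in a0 Fk Gk *.
pose Z := \sum_(1 <= j < Nf.+1) (j%:R : R) `^ (- beta).
apply: (@is_the_optimal_solution_KKT _ _ _ _ _ lam0 rc0 _
  (expR (- (a * water_level k beta a)) / Z)) => [|i iN|i iN].
- split; first exact: sum_waterfill.
  move=> i /andP[i1 iN]; have [ik|ki] := leqP i k; last by rewrite waterfill_eq0.
  by rewrite ltW // waterfill_gt0 // i1.
- rewrite /pr -/Z -/a mulrAC ler_pM2r ?invr_gt0 ?zipf_norm_gt0 ?(leq_trans k1 kN) //.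
  have [ik|ki] := leqP i k; first by rewrite zipf_tilted_eq // (andP iN).1.
  by apply: zipf_tilted_le => //; apply: Gk; apply: leq_trans ki _; case/andP: iN.
- have [ik|ki] := leqP i k; last by rewrite waterfill_eq0 ?eqxx.
  by move=> _; rewrite /pr -/Z -/a mulrAC zipf_tilted_eq // (andP iN).1.
Qed.

Lemma exists_crossing (R : realType) (f : nat -> R) (E : R) (n : nat) :
  f 1%N < E -> E <= f n.+1 ->
  exists k, [/\ (1 <= k <= n)%N, f k < E & E <= f k.+1].
Proof.
move=> f1; elim: n => [|n IH] fn; first by move: f1; rewrite ltNge fn.
have [fnE|/IH [k [/andP[k1 kn] fk fk1]]] := ltP (f n.+1) E.
  by exists n.+1; split => //; rewrite ltnS leqnn.
by exists k; split; rewrite ?k1 ?leqW.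
Qed.

Lemma threshold_bounds (R : realType) (Nf k : nat) (x : R) : (1 <= k <= Nf)%N ->
  k%:R ^+ k / k`!%:R < expR x -> expR x <= k.+1%:R ^+ k / k`!%:R ->
  x - 1 <= k%:R /\ k%:R <= x + ln (Num.sqrt (2 * pi * Nf%:R)) + 1.
Proof.
move=> /andP[k1 kN] Fk Gk.
have pos_ratio m : (0 < m)%N -> 0 < m%:R ^+ k / k`!%:R :> R.
  by move=> m0; rewrite divr_gt0 ?exprn_gt0 ?ltr0n ?fact_gt0.
split.
  move: Gk; rewrite -ler_ln ?posrE ?expR_gt0 ?pos_ratio // expRK => Gk.
  by have := ln_pow_succ_div_fact_le R k; lra.
move: Fk; rewrite -ltr_ln ?posrE ?expR_gt0 ?pos_ratio // expRK => Fk.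
have kN2pi : k%:R <= 2 * pi * Nf%:R :> R.
  have : k%:R <= Nf%:R :> R by rewrite ler_nat.
  by have := pi_ge2 R; have := ler0n R Nf; nra.
have Nf0 : 0 < 2 * pi * Nf%:R :> R by rewrite !mulr_gt0 ?pi_gt0 ?ltr0n ?(leq_trans k1 kN).
have ln_sqrt : ln (Num.sqrt (2 * pi * Nf%:R)) = ln (2 * pi * Nf%:R) / 2 :> R.
  by rewrite -{2}(sqr_sqrtr (ltW Nf0)) lnXn ?sqrtr_gt0 // mulr2n; field.
have ln_k : ln (k%:R : R) <= ln (2 * pi * Nf%:R) by rewrite ler_ln ?posrE ?ltr0n.
by have := ln_pow_div_fact_ge R k1; lra.
Qed.

Theorem proposition1 (R : realType) (Nf : nat) (beta lam rc : R) :
  (1 <= Nf)%N -> 0 < beta -> 0 < lam -> 0 < rc ->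
  (((Nf%:R ^+ Nf) / (Nf`!)%:R < expR (lam * pi * rc ^+ 2 / beta)) ->
     is_the_optimal_solution Nf beta lam rc
       (fun i : nat =>
          beta / (lam * pi * rc ^+ 2 * Nf%:R)
            * (\sum_(1 <= j < Nf.+1) ln (j%:R / i%:R)) + Nf%:R^-1))
  /\
  (~ ((Nf%:R ^+ Nf) / (Nf`!)%:R < expR (lam * pi * rc ^+ 2 / beta)) ->
     exists istar : nat,
       [/\ (1 <= istar <= Nf)%N,
           expR (lam * pi * rc ^+ 2 / beta)
             <= ((istar.+1)%:R ^+ istar) / (istar`!)%:R,
           (istar%:R ^+ istar) / (istar`!)%:R
             < expR (lam * pi * rc ^+ 2 / beta),
           lam * pi * rc ^+ 2 / beta - 1 <= istar%:R /\
           istar%:R <= lam * pi * rc ^+ 2 / beta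
                       + ln (Num.sqrt (2 * pi * Nf%:R)) + 1 &
           is_the_optimal_solution Nf beta lam rc
             (fun i : nat =>
                if (i <= istar)%N then
                  beta / (lam * pi * rc ^+ 2 * istar%:R)
                    * (\sum_(1 <= j < istar.+1) ln (j%:R / i%:R))
                  + istar%:R^-1
                else 0)]).
Proof.
move=> Nf1 beta0 lam0 rc0; set x := lam * pi * rc ^+ 2 / beta.
have x0 : 0 < x by rewrite divr_gt0 ?coverage_gt0.
split=> [FNf|notFNf].
  apply: is_the_optimal_solution_eq_on (waterfill_optimal beta0 lam0 rc0 _ FNf _).
  - by move=> i /andP[_ iN]; rewrite /waterfill iN.
  - by rewrite Nf1 leqnn.
  - by rewrite ltnn.
have F1 : 1%:R ^+ 1 / 1`!%:R < expR x by rewrite expr1 divr1 expR_gt1.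
have FNf : expR x <= Nf.-1.+1%:R ^+ Nf.-1.+1 / Nf.-1.+1`!%:R.
  by rewrite prednK // leNgt; apply/negP.
have [k [/andP[k1 kN] Fk]] :=
  exists_crossing (f := fun m => m%:R ^+ m / m`!%:R) F1 FNf.
rewrite pow_div_fact_succ => Gk.
have kNf : (1 <= k <= Nf)%N by rewrite k1 (leq_trans kN) ?leq_pred.
exists k; split => //; first exact: threshold_bounds kNf Fk Gk.
exact: waterfill_optimal beta0 lam0 rc0 kNf Fk (fun _ => Gk).
Qed.
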